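(* Let $\mathbf{U}$ and $\mathbf{V}$ be group varieties with $\mathbf{U}\subseteq\mathbf{V}$. Then every finite connected directed graph $\Gamma$ that has property $\mathrm{P}(\mathbf{U})$ also has property $\mathrm{P}(\mathbf{V})$.
   Context: All graphs are finite directed graphs, possibly with loops and multiple edges. A graph $\Gamma$ has vertex set $V(\Gamma)$ and edge set $E(\Gamma)$, and each edge $e$ has an initial vertex $\iota e$ and a terminal vertex $\tau e$. A subgraph is regarded as a set of vertices and edges (containing the endpoints of its edges); unions and intersections of subgraphs are taken as sets of vertices and edges. Connectedness refers to the underlying undirected graph. Let $\overline{\Gamma}$ be the graph with vertex set $V(\Gamma)$ and edge set $E(\Gamma)\sqcup E(\Gamma)^{-1}$, where for $e\in E(\Gamma)$ the formal edge $e^{-1}$ goes from $\tau e$ to $\iota e$. A path $p$ in $\overline{\Gamma}$ is either an empty path at a vertex or a sequence $e_1\cdots e_n$ of edges of $\overline{\Gamma}$ with $\tau e_i=\iota e_{i+1}$; it has initial vertex $\iota p$ and terminal vertex $\tau p$, and is regarded as a word over the alphabet $E(\Gamma)\cup E(\Gamma)^{-1}$. The span $\langle p\rangle$ is the subgraph of $\Gamma$ consisting of the vertices traversed by $p$ and the edges $e\in E(\Gamma)$ such that $e$ or $e^{-1}$ occurs in $p$. For a group variety $\mathbf{U}$ and words $u,v$ over $X\cup X^{-1}$, write $u\equiv_{\mathbf U} v$ if $u$ and $v$ represent the same element of the relatively free group of $\mathbf U$ on $X$ (i.e. the identity $u=v$ holds in $\mathbf U$), and $[u]_{\mathbf U}$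 for the class of $u$. The free $g\mathbf U$-category on $\Gamma$ has vertex set $V(\Gamma)$; its arrows from $i$ to $j$ are the triples $(i,[p]_{\mathbf U},j)$ with $p$ an $(i,j)$-path in $\overline\Gamma$, and $(i,[p]_{\mathbf U},j)(j,[q]_{\mathbf U},k)=(i,[pq]_{\mathbf U},k)$; for an arrow $x=(i,[p]_{\mathbf U},j)$ put $\iota x=i$, $\tau x=j$. For each arrow $x$ define subgraphs of $\Gamma$: $C_0(x)=\bigcap\{\langle p\rangle : p \text{ a path in }\overline\Gamma \text{ with } (\iota p,[p]_{\mathbf U},\tau p)=x\}$; $P_n(x)$ is the connected component of $C_n(x)$ containing $\iota x$; $C_{n+1}(x)=\bigcap\{P_n(x_1)\cup\cdots\cup P_n(x_k) : k\ge 1,\ x_1,\dots,x_k \text{ arrows with } x_1\cdots x_k=x\}$; and $P(x)=\bigcap_{n\ge 0}P_n(x)$. A connected graph $\Gamma$ has property $\mathrm{P}(\mathbf U)$ if $\tau x\in P(x)$ for every arrow $x$ of the free $g\mathbf U$-category on $\Gamma$. *)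

From mathcomp Require Import all_boot.
From Stdlib Require List.
Set Implicit Arguments. Unset Strict Implicit. Unset Printing Implicit Defensive.

Record group := Group {
  gcar :> Type;
  gmul : gcar -> gcar -> gcar;
  ginv : gcar -> gcar;
  gone : gcar;
  gmulA : forall x y z, gmul x (gmul y z) = gmul (gmul x y) z;
  gmul1 : forall x, gmul gone x = x;
  gmulV : forall x, gmul (ginv x) x = gone }.

(* Words over X ∪ X^{-1}: the letter (x,false) is x, (x,true) is x^{-1}. *)
Definition word (X : Type) := seq (X * bool).

Definition geval (G : group) (X : Type) (a : X -> G) (w : word X) : G :=
  foldr (fun l acc => gmul (if l.2 then ginv (a l.1) else a l.1) acc) (gone G) w.

(* A variety is given by its set of defining laws u = v in the variables x_0, x_1, ... *)
Definition law := (word nat * word nat)%type.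
Definition variety := law -> Prop.

Definition in_variety (U : variety) (G : group) : Prop :=
  forall l, U l -> forall a : nat -> G, geval a l.1 = geval a l.2.

Definition subvariety (U V : variety) : Prop :=
  forall G : group, in_variety U G -> in_variety V G.

Definition weq (U : variety) (X : Type) (u v : word X) : Prop :=
  forall G : group, in_variety U G -> forall a : X -> G, geval a u = geval a v.

Record digraph := Digraph {
  vert : finType;
  edge : finType;
  src : edge -> vert;
  tgt : edge -> vert }.

Section Graph.
Variable Γ : digraph.

Definition lsrc (l : edge Γ * bool) : vert Γ := if l.2 then tgt l.1 else src l.1.
Definition ltgt (l : edge Γ * bool) : vert Γ := if l.2 then src l.1 else tgt l.1.

Fixpoint is_path (i : vert Γ) (p : word (edge Γ)) (j : vert Γ) : Prop :=
  match p with
  | [::] => i = j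
  | l :: q => lsrc l = i /\ is_path (ltgt l) q j
  end.

Definition connected : Prop := forall v w : vert Γ, exists p, is_path v p w.

Record subgraph := Subgraph { sv : vert Γ -> Prop; se : edge Γ -> Prop }.

Definition span (i : vert Γ) (p : word (edge Γ)) : subgraph :=
  Subgraph (fun v => v = i \/ exists l, List.In l p /\ v = ltgt l)
           (fun e => exists b, List.In (e, b) p).

(* connected component of S containing v0 (empty if v0 ∉ S) *)
Definition reach (S : subgraph) (v0 w : vert Γ) : Prop :=
  exists p, is_path v0 p w /\ (forall v, sv (span v0 p) v -> sv S v)
                          /\ (forall e, se (span v0 p) e -> se S e).
Definition component (S : subgraph) (v0 : vert Γ) : subgraph :=
  Subgraph (fun w => reach S v0 w)
           (fun e => se S e /\ reach S v0 (src e) /\ reach S v0 (tgt e)).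

(* arrows of the free gU-category: triples (i,[p],j), handled via representatives *)
Record arrow := Arrow { ai : vert Γ; aw : word (edge Γ); aj : vert Γ }.
Definition valid (x : arrow) : Prop := is_path (ai x) (aw x) (aj x).

Variable U : variety.

Definition C0 (x : arrow) : subgraph :=
  Subgraph (fun v => forall p, is_path (ai x) p (aj x) -> weq U p (aw x) ->
                                sv (span (ai x) p) v)
           (fun e => forall p, is_path (ai x) p (aj x) -> weq U p (aw x) ->
                                se (span (ai x) p) e).

Fixpoint chain (i : vert Γ) (xs : seq arrow) (j : vert Γ) : Prop :=
  match xs with
  | [::] => i = j
  | y :: ys => ai y = i /\ valid y /\ chain (aj y) ys j
  end.

Definition factorization (x : arrow) (xs : seq arrow) : Prop :=
  xs <> [::] /\ chain (ai x) xs (aj x) /\ weq U (flatten (map aw xs)) (aw x).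

Definition Cnext (P : arrow -> subgraph) (x : arrow) : subgraph :=
  Subgraph (fun v => forall xs, factorization x xs ->
                       exists y, List.In y xs /\ sv (P y) v)
           (fun e => forall xs, factorization x xs ->
                       exists y, List.In y xs /\ se (P y) e).

Fixpoint Cn (n : nat) : arrow -> subgraph :=
  match n with
  | 0 => C0
  | m.+1 => Cnext (fun y => component (Cn m y) (ai y))
  end.
Definition Pn (n : nat) (x : arrow) : subgraph := component (Cn n x) (ai x).

Definition Pinf (x : arrow) : subgraph :=
  Subgraph (fun v => forall n, sv (Pn n x) v) (fun e => forall n, se (Pn n x) e).

Definition has_property_P : Prop := forall x : arrow, valid x -> sv (Pinf x) (aj x).

End Graph.

(* Every law of V holds in U, so V-equivalence of words implies U-equivalence.
   Hence every path and every factorization representing an arrow over V also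
   represents it over U: the intersections defining C_0 and C_(n+1) over V range
   over fewer sets, and by induction C_n, P_n and P computed over U are
   contained in those computed over V. *)
From mathcomp Require Import all_boot.

Lemma weq_subvariety {U V : variety} {X : Type} {u v : word X} :
  subvariety U V -> weq V u v -> weq U u v.
Proof. by move=> UV uv G GU; apply: uv; apply: UV. Qed.

Lemma factorization_subvariety {U V : variety} {Γ : digraph}
    {x : arrow Γ} {xs} :
  subvariety U V -> factorization V x xs -> factorization U x xs.
Proof.
by move=> UV [xs_ne [xs_chain xs_eq]]; do 2!split=> //; exact: weq_subvariety UV xs_eq.
Qed.

Section SubgraphInclusion.

Variable Γ : digraph.

Definition subgraph_le (S T : subgraph Γ) : Prop :=
  (forall v, sv S v -> sv T v) /\ (forall e, se S e -> se T e).

Lemma reach_subgraph (S T : subgraph Γ) v0 w :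
  subgraph_le S T -> reach S v0 w -> reach T v0 w.
Proof.
move=> [STv STe] [p [p_path [p_v p_e]]]; exists p; split=> //.
by split=> ? ?; [apply: STv; apply: p_v | apply: STe; apply: p_e].
Qed.

Lemma component_subgraph (S T : subgraph Γ) v0 :
  subgraph_le S T -> subgraph_le (component S v0) (component T v0).
Proof.
move=> ST; split=> [v|e [Se [reach_src reach_tgt]]]; first exact: reach_subgraph.
by split; [apply: (proj2 ST) | split; exact: reach_subgraph ST _].
Qed.

Variables U V : variety.
Hypothesis UV : subvariety U V.

Lemma C0_subvariety x : subgraph_le (C0 U x) (C0 V x).
Proof.
by split=> [v|e] inC0 p p_path p_eq; apply: inC0 => //; exact: weq_subvariety UV p_eq.
Qed.

Lemma Cnext_subvariety (P Q : arrow Γ -> subgraph Γ) x :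
  (forall y, subgraph_le (P y) (Q y)) ->
  subgraph_le (Cnext U P x) (Cnext V Q x).
Proof.
move=> PQ; split=> [v|e] inCnext xs /(factorization_subvariety UV) /inCnext
  [y [y_xs inPy]]; exists y; split=> //.
- exact: (proj1 (PQ y)).
- exact: (proj2 (PQ y)).
Qed.

Lemma Cn_subvariety n x : subgraph_le (Cn U n x) (Cn V n x).
Proof.
elim: n x => [|n IHn] x; first exact: C0_subvariety.
by apply: Cnext_subvariety => y; exact/component_subgraph/IHn.
Qed.

Lemma Pn_subvariety n x : subgraph_le (Pn U n x) (Pn V n x).
Proof. exact/component_subgraph/Cn_subvariety. Qed.

End SubgraphInclusion.

Theorem lemma2p4 (U V : variety) (Γ : digraph) :
  subvariety U V -> connected Γ -> has_property_P Γ U -> has_property_P Γ V.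
Proof.
move=> UV _ PU x x_valid n.
exact: (proj1 (@Pn_subvariety Γ U V UV n x)) (PU x x_valid n).
Qed.
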